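(* Let $U$ be a nonconstant stationary solution. If the derivative $U_x$ has at least three zeros in $[0,1)$, then $U$ is linearly unstable.
   Context: $\mathbb{T}=[0,1]$ with endpoints identified; $D,\kappa>0$; stationary solutions $U\in W^{2,2}(\mathbb{T})$ solve $0=DU_{xx}-U+\kappa e^U/\int_0^1e^Udy$ with periodic boundary conditions. Linearization: $\mathcal L\varphi=D\varphi_{xx}+\big(\kappa\frac{e^U}{\int_0^1e^U}-1\big)\varphi-\kappa\frac{e^U}{(\int_0^1e^U)^2}\int_0^1e^U\varphi\,dy$ on $L^2(\mathbb{T})$, domain $W^{2,2}(\mathbb{T})$. $U$ is linearly unstable if $\mathcal L$ has an eigenvalue with positive real part. *)

From Stdlib Require Import Reals.
From Coquelicot Require Import Coquelicot.
Open Scope R_scope.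

(* Functions on the torus T = [0,1] with endpoints identified are modelled
   as 1-periodic functions on R. *)
Definition periodic1 (f : R -> R) : Prop := forall x, f (x + 1) = f x.
Definition periodic1C (f : R -> C) : Prop := forall x, f (x + 1) = f x.

Definition massU (U : R -> R) : R := RInt (fun y => exp (U y)) 0 1.

Definition stationary_solution (D kappa : R) (U : R -> R) : Prop :=
  periodic1 U /\
  (forall x, ex_derive U x) /\
  (forall x, ex_derive (Derive U) x) /\
  (forall x, D * Derive_n U 2 x - U x + kappa * exp (U x) / massU U = 0).

Definition CInt01 (f : R -> C) : C := @RInt C_R_CompleteNormedModule f 0 1.

(* The linearization applied to phi, given its second derivative phi2:
   L phi = D phi_xx + (kappa e^U/M - 1) phi - kappa e^U/M^2 \int_0^1 e^U phi *)
Definition Lop (D kappa : R) (U : R -> R) (phi phi2 : R -> C) (x : R) : C :=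
  Cminus
    (Cplus (Cmult (RtoC D) (phi2 x))
           (Cmult (RtoC (kappa * exp (U x) / massU U - 1)) (phi x)))
    (Cmult (RtoC (kappa * exp (U x) / (massU U ^ 2)))
           (CInt01 (fun y => Cmult (RtoC (exp (U y))) (phi y)))).

Definition is_eigenvalue_L (D kappa : R) (U : R -> R) (lam : C) : Prop :=
  exists phi phi1 phi2 : R -> C,
    periodic1C phi /\
    (exists x, phi x <> RtoC 0) /\
    (forall x, @is_derive R_AbsRing C_R_NormedModule phi x (phi1 x)) /\
    (forall x, @is_derive R_AbsRing C_R_NormedModule phi1 x (phi2 x)) /\
    (forall x, Lop D kappa U phi phi2 x = Cmult lam (phi x)).

Definition linearly_unstable (D kappa : R) (U : R -> R) : Prop :=
  exists lam : C, 0 < Re lam /\ is_eigenvalue_L D kappa U lam.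

From Stdlib Require Import Reals Lra Psatz Factorial Ranalysis5 PSeries_reg.
From Stdlib Require Import Classical ClassicalEpsilon FunctionalExtensionality.
From Coquelicot Require Import Coquelicot.
Open Scope R_scope.

(* At a critical point [x1] the profile equation
   [D U'' = U - kappa e^U / M] is autonomous and reversible, so [U] is even about [x1]
   and [U'] odd; differentiating it, [U'] solves the local part [D w'' + q w = 0] of the
   linearisation, [q = kappa e^U / M - 1].  Three critical points in a period give a zero
   [s] of [U'(x1 + .)] in (0, 1/2), and [U''(x1) <> 0] as [U] is not constant.  Now shoot in [lam]: let [y_lam] solve
   [D y'' + q y = lam y], [y(0) = 0], [y'(0) = 1] (translated to [x1]).  For [lam = 0] it
   vanishes at [s], for large [lam] it is positive on (0, 1/2]; at the infimum [lam*] of the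
   [lam] with [y_lam > 0] on (0, 1/2], [y_lam*] is nonnegative there and vanishes somewhere,
   and only at 1/2 since a nonnegative solution cannot touch 0 at an interior point.  As
   [q] is even about 0 and about 1/2, [y_lam*] is odd and 1-periodic, so
   [int_0^1 e^U y_lam* = 0]: the nonlocal term vanishes and [lam* > 0] is an eigenvalue.
   Linear solutions are built by Picard iteration; uniqueness comes from a Gronwall bound
   on the energy [w^2 + w'^2]. *)

(* [auto_derive] leaves [Derive g x] for abstract [g]; [H : is_derive g x l] evaluates it. *)
Ltac rewrite_Derive H :=
  match type of H with is_derive _ ?x ?l =>
    match goal with |- context [Derive ?g x] =>
      replace (Derive g x) with l by (symmetry; apply is_derive_unique; exact H)
    end
  end.

Lemma is_derive_comp_affine (f : R -> R) (a b t l : R) :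
  is_derive f (a + b * t) l -> is_derive (fun s => f (a + b * s)) t (b * l).
Proof.
  intros H. apply (is_derive_comp f (fun s => a + b * s)); [exact H|].
  auto_derive; [exact I | ring].
Qed.

Lemma is_derive_shift (f : R -> R) (a t l : R) :
  is_derive f (a + t) l -> is_derive (fun s => f (a + s)) t l.
Proof.
  intros H. apply (is_derive_ext (fun s => f (a + 1 * s))); [intros s; now rewrite Rmult_1_l|].
  replace l with (1 * l) by ring. apply is_derive_comp_affine. now rewrite Rmult_1_l.
Qed.

Lemma is_derive_reflect (f : R -> R) (a t l : R) :
  is_derive f (a - t) l -> is_derive (fun s => f (a - s)) t (- l).
Proof.
  intros H. apply (is_derive_ext (fun s => f (a + -1 * s))); [intros s; f_equal; ring|].
  replace (- l) with (-1 * l) by ring. apply is_derive_comp_affine.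
  now replace (a + -1 * t) with (a - t) by ring.
Qed.

Lemma is_derive_sub_shift (f : R -> R) (a t l : R) :
  is_derive f (t - a) l -> is_derive (fun s => f (s - a)) t l.
Proof.
  intros H. apply (is_derive_ext (fun s => f (- a + s))); [intros s; f_equal; ring|].
  apply is_derive_shift. now replace (- a + t) with (t - a) by ring.
Qed.

Lemma le_of_is_derive_nonneg (f df : R -> R) (a b : R) : a <= b ->
  (forall x, a <= x <= b -> is_derive f x (df x)) ->
  (forall x, a <= x <= b -> 0 <= df x) -> f a <= f b.
Proof.
  intros Hab Hd Hp.
  destruct (MVT_gen f a b df) as [c [Hc Heq]]; rewrite Rmin_left, Rmax_right in * by lra.
  - intros x Hx. apply Hd; lra.
  - intros x Hx. apply continuity_pt_filterlim, (ex_derive_continuous f).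
    exists (df x). apply Hd; lra.
  - assert (0 <= df c) by (apply Hp; lra). nra.
Qed.

Lemma continuous_of_is_derive (f : R -> R) (x l : R) : is_derive f x l -> continuous f x.
Proof. intros H. apply (@ex_derive_continuous R_AbsRing R_NormedModule). now exists l. Qed.

Lemma continuous_bounded (f : R -> R) (a b : R) : (forall x, continuous f x) ->
  exists K, 0 <= K /\ forall u, a <= u <= b -> Rabs (f u) <= K.
Proof.
  intros Hf. destruct (Rle_dec a b) as [Hab | Hab].
  - destruct (continuity_ab_maj (fun u => Rabs (f u)) a b Hab) as [M [HM _]].
    + intros c _. apply (continuity_pt_comp f Rabs).
      * apply continuity_pt_filterlim, Hf.
      * apply Rcontinuity_abs.
    + exists (Rabs (f M)). split; [apply Rabs_pos | exact HM].
  - exists 0. split; [lra | intros; lra].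
Qed.

Lemma is_derive_RInt_0 (f : R -> R) (t : R) : (forall x, continuous f x) ->
  is_derive (fun t => RInt f 0 t) t (f t).
Proof.
  intros Hf. apply (is_derive_RInt f _ 0); [|apply Hf].
  apply filter_forall. intros b.
  apply (@RInt_correct R_CompleteNormedModule), (@ex_RInt_continuous R_CompleteNormedModule).
  intros z _. apply Hf.
Qed.

Lemma abs_sub_le_of_is_derive (G g H h : R -> R) (a b : R) : a <= b ->
  (forall u, a <= u <= b -> is_derive G u (g u)) ->
  (forall u, a <= u <= b -> is_derive H u (h u)) ->
  (forall u, a <= u <= b -> Rabs (g u) <= h u) ->
  Rabs (G b - G a) <= H b - H a.
Proof.
  intros Hab HG HH Hb.
  assert (H1 : H a - G a <= H b - G b).
  { apply (le_of_is_derive_nonneg (fun u => H u - G u) (fun u => h u - g u) a b Hab).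
    - intros u Hu. apply (is_derive_minus H G); auto.
    - intros u Hu. pose proof (Hb u Hu). pose proof (Rle_abs (g u)). lra. }
  assert (H2 : H a + G a <= H b + G b).
  { apply (le_of_is_derive_nonneg (fun u => H u + G u) (fun u => h u + g u) a b Hab).
    - intros u Hu. apply (is_derive_plus H G); auto.
    - intros u Hu. pose proof (Hb u Hu). pose proof (Rle_abs (- g u)).
      rewrite Rabs_Ropp in *. lra. }
  apply Rabs_le. lra.
Qed.

Lemma eq_of_is_derive_0 (f : R -> R) : (forall x, is_derive f x 0) -> forall a b, f a = f b.
Proof.
  intros H.
  assert (Hle : forall a b, a <= b -> f a = f b).
  { intros a b Hab. apply Rle_antisym.
    - apply (le_of_is_derive_nonneg f (fun _ => 0)); auto; intros; lra.
    - enough (- f a <= - f b) by lra.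
      apply (le_of_is_derive_nonneg (fun x => - f x) (fun _ => 0)); auto; [|intros; lra].
      intros x _. rewrite <- Ropp_0. apply (is_derive_opp f), H. }
  intros a b. destruct (Rle_dec a b); [auto | symmetry; apply Hle; lra].
Qed.

Lemma exp_le_compat (x y : R) : x <= y -> exp x <= exp y.
Proof. intros [Hxy | <-]; [left; apply exp_increasing, Hxy | lra]. Qed.

Lemma exp_ge1 (x : R) : 0 <= x -> 1 <= exp x.
Proof. intros Hx. rewrite <- exp_0. apply exp_le_compat, Hx. Qed.

Lemma exp_lipschitz (a b M : R) : a <= M -> b <= M -> Rabs (exp a - exp b) <= exp M * Rabs (a - b).
Proof.
  intros Ha Hb.
  destruct (MVT_gen exp b a exp) as [c [Hc Heq]].
  - intros x _. apply is_derive_Reals, derivable_pt_lim_exp.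
  - intros x _. apply derivable_continuous_pt. exists (exp x). apply derivable_pt_lim_exp.
  - rewrite Heq, Rabs_mult, (Rabs_pos_eq (exp c)) by (left; apply exp_pos).
    apply Rmult_le_compat_r; [apply Rabs_pos|].
    apply exp_le_compat. unfold Rmin, Rmax in Hc. destruct (Rle_dec b a); lra.
Qed.

Lemma abs_le_of_sq_le (a b X : R) : 0 <= b -> 1 <= X -> a ^ 2 <= b ^ 2 * X -> Rabs a <= b * X.
Proof.
  intros Hb HX Ha. rewrite <- pow2_abs in Ha. pose proof (Rabs_pos a).
  apply Rnot_lt_le. intros Hlt.
  assert (b * X * (b * X) < Rabs a * Rabs a) by (apply Rmult_le_0_lt_compat; nra).
  assert (b ^ 2 * X <= b * X * (b * X)) by (pose proof (pow2_ge_0 b); nra).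
  nra.
Qed.

(** * Energy estimates and uniqueness *)

Lemma gronwall (E dE : R -> R) (A c T : R) : 0 < A ->
  (forall t, 0 <= t <= T -> is_derive E t (dE t)) ->
  (forall t, 0 <= t <= T -> dE t <= A * E t + c) ->
  forall t, 0 <= t <= T -> E t + c / A <= (E 0 + c / A) * exp (A * t).
Proof.
  intros HA Hd Hb t Ht.
  assert (Hmono : - ((E 0 + c / A) * exp (- A * 0)) <= - ((E t + c / A) * exp (- A * t))).
  { apply (le_of_is_derive_nonneg (fun s => - ((E s + c / A) * exp (- A * s)))
             (fun s => exp (- A * s) * (A * E s + c - dE s))); [lra| |].
    - intros x Hx. assert (HE : is_derive E x (dE x)) by (apply Hd; lra).
      auto_derive; [exists (dE x); exact HE|].
      rewrite_Derive HE. field. lra.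
    - intros x Hx. assert (dE x <= A * E x + c) by (apply Hb; lra).
      pose proof (exp_pos (- A * x)). nra. }
  rewrite Rmult_0_r, exp_0, Rmult_1_r in Hmono.
  assert (Hinv : exp (- A * t) * exp (A * t) = 1).
  { rewrite <- exp_plus. replace (- A * t + A * t) with 0 by ring. apply exp_0. }
  pose proof (exp_pos (A * t)).
  assert (H1 : (E t + c / A) * exp (- A * t) * exp (A * t) <= (E 0 + c / A) * exp (A * t)).
  { apply Rmult_le_compat_r; lra. }
  rewrite Rmult_assoc, Hinv, Rmult_1_r in H1. exact H1.
Qed.

Lemma energy_estimate (w w1 w2 : R -> R) (K e T : R) : 0 <= K -> 0 <= e ->
  (forall t, 0 <= t <= T -> is_derive w t (w1 t) /\ is_derive w1 t (w2 t) /\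
     Rabs (w2 t) <= K * Rabs (w t) + e) ->
  forall t, 0 <= t <= T ->
  w t ^ 2 + w1 t ^ 2 <= (w 0 ^ 2 + w1 0 ^ 2 + e ^ 2) * exp ((K + 2) * t).
Proof.
  intros HK He H t Ht.
  assert (G := gronwall (fun s => w s ^ 2 + w1 s ^ 2) (fun s => 2 * w s * w1 s + 2 * w1 s * w2 s)
                 (K + 2) (e ^ 2) T ltac:(lra)).
  assert (HG : w t ^ 2 + w1 t ^ 2 + e ^ 2 / (K + 2) <=
               (w 0 ^ 2 + w1 0 ^ 2 + e ^ 2 / (K + 2)) * exp ((K + 2) * t)).
  { apply G; [| |exact Ht]; intros s Hs; destruct (H s Hs) as [Hw [Hw1 Hw2]].
    - auto_derive; [repeat split; eexists; eassumption|].
      rewrite_Derive Hw. rewrite_Derive Hw1. ring.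
    - assert (Hp : w1 s * w2 s <= Rabs (w1 s) * (K * Rabs (w s) + e)).
      { eapply Rle_trans; [apply Rle_abs|]. rewrite Rabs_mult.
        apply Rmult_le_compat_l; [apply Rabs_pos | exact Hw2]. }
      rewrite <- (pow2_abs (w s)), <- (pow2_abs (w1 s)).
      pose proof (Rabs_pos (w s)). pose proof (Rabs_pos (w1 s)).
      assert (2 * w s * w1 s <= 2 * Rabs (w s) * Rabs (w1 s)).
      { pose proof (Rle_abs (w s * w1 s)). rewrite Rabs_mult in *. lra. }
      assert (0 <= K * (Rabs (w s) - Rabs (w1 s)) ^ 2)
        by (apply Rmult_le_pos; [lra | apply pow2_ge_0]).
      pose proof (pow2_ge_0 (Rabs (w s) - Rabs (w1 s))). pose proof (pow2_ge_0 (Rabs (w1 s) - e)).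
      nra. }
  assert (Hc : 0 <= e ^ 2 / (K + 2) <= e ^ 2).
  { split; [apply Rmult_le_pos; [nra | left; apply Rinv_0_lt_compat; lra]|].
    apply Rmult_le_reg_l with (K + 2); [lra|]. field_simplify; nra. }
  pose proof (exp_pos ((K + 2) * t)). nra.
Qed.

Lemma eq0_of_zero_data_forward (w w1 w2 : R -> R) (K T : R) : 0 <= K ->
  (forall t, 0 <= t <= T -> is_derive w t (w1 t) /\ is_derive w1 t (w2 t) /\
     Rabs (w2 t) <= K * Rabs (w t)) ->
  w 0 = 0 -> w1 0 = 0 -> forall t, 0 <= t <= T -> w t = 0.
Proof.
  intros HK H H0 H10 t Ht.
  assert (E := energy_estimate w w1 w2 K 0 T HK (Rle_refl 0)).
  specialize (E ltac:(intros s Hs; rewrite Rplus_0_r; apply H, Hs) t Ht).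
  rewrite H0, H10 in E. replace ((0 ^ 2 + 0 ^ 2 + 0 ^ 2) * exp ((K + 2) * t)) with 0 in E by ring.
  pose proof (pow2_ge_0 (w t)). pose proof (pow2_ge_0 (w1 t)). nra.
Qed.

Lemma eq0_of_zero_data (w w1 w2 : R -> R) :
  (forall t, is_derive w t (w1 t)) -> (forall t, is_derive w1 t (w2 t)) ->
  (forall T, exists K, 0 <= K /\ forall t, - T <= t <= T -> Rabs (w2 t) <= K * Rabs (w t)) ->
  w 0 = 0 -> w1 0 = 0 -> forall t, w t = 0.
Proof.
  intros Hw Hw1 HK H0 H10 t.
  destruct (HK (Rabs t)) as [K [HK0 HKb]].
  pose proof (Rle_abs t). pose proof (Rle_abs (- t)). rewrite Rabs_Ropp in *.
  destruct (Rle_dec 0 t) as [Ht | Ht].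
  - apply (eq0_of_zero_data_forward w w1 w2 K (Rabs t)); [exact HK0| |exact H0|exact H10|lra].
    intros s Hs. split; [apply Hw | split; [apply Hw1 | apply HKb; lra]].
  - replace t with (0 - - t) by ring.
    apply (eq0_of_zero_data_forward (fun s => w (0 - s)) (fun s => - w1 (0 - s))
             (fun s => w2 (0 - s)) K (Rabs t)); [exact HK0| | | |lra].
    + intros s Hs. split; [|split].
      * apply is_derive_reflect, Hw.
      * replace (w2 (0 - s)) with (- - w2 (0 - s)) by ring.
        apply (is_derive_opp (fun s => w1 (0 - s))), is_derive_reflect, Hw1.
      * apply HKb; lra.
    + now rewrite Rminus_0_r.
    + rewrite Rminus_0_r, H10. ring.
Qed.

Lemma autonomous_unique (g : R -> R) (a a1 b b1 : R -> R) :
  (forall M, exists K, 0 <= K /\ forall u w, Rabs u <= M -> Rabs w <= M ->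
     Rabs (g u - g w) <= K * Rabs (u - w)) ->
  (forall t, is_derive a t (a1 t)) -> (forall t, is_derive a1 t (g (a t))) ->
  (forall t, is_derive b t (b1 t)) -> (forall t, is_derive b1 t (g (b t))) ->
  a 0 = b 0 -> a1 0 = b1 0 -> forall t, a t = b t.
Proof.
  intros Hg Ha Ha1 Hb Hb1 E0 E1 t.
  enough (H : a t - b t = 0) by lra. revert t.
  apply (eq0_of_zero_data _ (fun t => a1 t - b1 t) (fun t => g (a t) - g (b t))).
  - intros s. apply (is_derive_minus a b); auto.
  - intros s. apply (is_derive_minus a1 b1); auto.
  - intros T.
    destruct (continuous_bounded a (- T) T (fun x => continuous_of_is_derive _ _ _ (Ha x)))
      as [Ka [_ HKa]].
    destruct (continuous_bounded b (- T) T (fun x => continuous_of_is_derive _ _ _ (Hb x)))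
      as [Kb [_ HKb]].
    destruct (Hg (Rmax Ka Kb)) as [K [HK HKb']]. exists K. split; [exact HK|].
    intros s Hs. apply HKb'.
    + apply Rle_trans with Ka; [auto | apply Rmax_l].
    + apply Rle_trans with Kb; [auto | apply Rmax_r].
  - lra.
  - lra.
Qed.

(** * Linear equations [y'' = p y] *)

Definition lin_sol (p y v : R -> R) : Prop :=
  (forall t, is_derive y t (v t)) /\ (forall t, is_derive v t (p t * y t)).

Lemma lin_sol_unique (p y1 v1 y2 v2 : R -> R) (t0 : R) : (forall x, continuous p x) ->
  lin_sol p y1 v1 -> lin_sol p y2 v2 -> y1 t0 = y2 t0 -> v1 t0 = v2 t0 ->
  forall t, y1 t = y2 t.
Proof.
  intros Hp [Hy1 Hv1] [Hy2 Hv2] E1 E2 t.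
  enough (H : forall s, y1 (t0 + s) - y2 (t0 + s) = 0).
  { specialize (H (t - t0)). replace (t0 + (t - t0)) with t in H by ring. lra. }
  apply (eq0_of_zero_data _ (fun s => v1 (t0 + s) - v2 (t0 + s))
           (fun s => p (t0 + s) * (y1 (t0 + s) - y2 (t0 + s)))).
  - intros s. apply (is_derive_minus (fun s => y1 (t0 + s)) (fun s => y2 (t0 + s)));
      apply is_derive_shift; [apply Hy1 | apply Hy2].
  - intros s. rewrite Rmult_minus_distr_l.
    apply (is_derive_minus (fun s => v1 (t0 + s)) (fun s => v2 (t0 + s)));
      apply is_derive_shift; [apply Hv1 | apply Hv2].
  - intros T. destruct (continuous_bounded p (t0 - T) (t0 + T) Hp) as [K [HK HKb]].
    exists K. split; [exact HK|]. intros s Hs. rewrite Rabs_mult.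
    apply Rmult_le_compat_r; [apply Rabs_pos | apply HKb; lra].
  - rewrite Rplus_0_r. lra.
  - rewrite Rplus_0_r. lra.
Qed.

Lemma lin_sol_scal (p y v : R -> R) (c : R) :
  lin_sol p y v -> lin_sol p (fun t => c * y t) (fun t => c * v t).
Proof.
  intros [Hy Hv]. split; intros t.
  - apply (is_derive_scal y), Hy.
  - replace (p t * (c * y t)) with (c * (p t * y t)) by ring. apply (is_derive_scal v), Hv.
Qed.

Lemma derive_eq0_of_eq0 (y v : R -> R) :
  (forall t, is_derive y t (v t)) -> (forall t, y t = 0) -> forall t, v t = 0.
Proof.
  intros Hy H0 t. rewrite <- (Derive_const 0 t).
  symmetry. apply is_derive_unique, (is_derive_ext y); [exact H0 | apply Hy].
Qed.

Lemma lin_sol_nontrivial (p y v : R -> R) : lin_sol p y v -> v 0 = 1 -> exists t, y t <> 0.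
Proof.
  intros [Hy _] Hv0. apply NNPP. intros Hn.
  assert (Hz : forall t, y t = 0) by (intros t; apply NNPP; intros Ht; apply Hn; now exists t).
  pose proof (derive_eq0_of_eq0 y v Hy Hz 0). lra.
Qed.

Lemma lin_sol_eq0_of_interior_zero (p y v : R -> R) (a b t0 : R) :
  (forall x, continuous p x) -> lin_sol p y v ->
  (forall t, a <= t <= b -> 0 <= y t) -> a < t0 < b -> y t0 = 0 -> forall t, y t = 0.
Proof.
  intros Hp [Hy Hv] Hpos Ht0 Hz.
  (* [t0] is an interior minimum, so [y'] vanishes there as well. *)
  assert (Hv0 : v t0 = 0).
  { assert (pr : derivable_pt y t0) by (exists (v t0); apply is_derive_Reals, Hy).
    rewrite <- (deriv_minimum y a b t0 pr); try lra.
    - symmetry. apply derive_pt_eq_0, is_derive_Reals, Hy.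
    - intros x Hx1 Hx2. rewrite Hz. apply Hpos; lra. }
  intros t. apply (lin_sol_unique p y v (fun _ => 0) (fun _ => 0) t0);
    [exact Hp | split; assumption | split | exact Hz | exact Hv0].
  - intros s. apply (@is_derive_const R_AbsRing R_NormedModule).
  - intros s. rewrite Rmult_0_r. apply (@is_derive_const R_AbsRing R_NormedModule).
Qed.

Lemma lin_sol_antisymmetric (p y v : R -> R) (a : R) :
  (forall x, continuous p x) -> lin_sol p y v -> (forall t, p (2 * a - t) = p t) ->
  y a = 0 -> forall t, y (2 * a - t) = - y t.
Proof.
  intros Hp [Hy Hv] Hsym Ha t.
  enough (E : forall t, - y (2 * a - t) = y t) by (specialize (E t); lra).
  apply (lin_sol_unique p (fun t => - y (2 * a - t)) (fun t => v (2 * a - t)) y v a Hp);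
    [split | split; assumption | |].
  - intros s. rewrite <- (Ropp_involutive (v _)).
    apply (is_derive_opp (fun s => y (2 * a - s))), is_derive_reflect, Hy.
  - intros s. replace (p s * - y (2 * a - s)) with (- (p (2 * a - s) * y (2 * a - s)))
      by (rewrite Hsym; ring).
    apply is_derive_reflect, Hv.
  - replace (2 * a - a) with a by ring. rewrite Ha. ring.
  - f_equal. ring.
Qed.

Lemma lin_sol_bound (p y v : R -> R) (B T : R) : lin_sol p y v -> y 0 = 0 -> v 0 = 1 -> 0 <= B ->
  (forall t, 0 <= t <= T -> Rabs (p t) <= B) ->
  forall t, 0 <= t <= T -> Rabs (y t) <= exp ((B + 2) * T).
Proof.
  intros [Hy Hv] Hy0 Hv0 HB Hp t Ht.
  assert (E := energy_estimate y v (fun t => p t * y t) B 0 T HB (Rle_refl 0)).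
  rewrite <- (Rmult_1_l (exp _)). apply abs_le_of_sq_le; [lra | apply exp_ge1; nra|].
  assert (Hmono : exp ((B + 2) * t) <= exp ((B + 2) * T)) by (apply exp_le_compat; nra).
  enough (y t ^ 2 + v t ^ 2 <= exp ((B + 2) * t)) by (pose proof (pow2_ge_0 (v t)); lra).
  replace (exp ((B + 2) * t)) with ((y 0 ^ 2 + v 0 ^ 2 + 0 ^ 2) * exp ((B + 2) * t))
    by (rewrite Hy0, Hv0; ring).
  apply E; [|exact Ht]. intros s Hs. split; [apply Hy | split; [apply Hv|]].
  rewrite Rabs_mult, Rplus_0_r. apply Rmult_le_compat_r; [apply Rabs_pos | auto].
Qed.

Lemma lin_sol_param_lipschitz (p1 p2 y1 v1 y2 v2 : R -> R) (B d T : R) :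
  lin_sol p1 y1 v1 -> lin_sol p2 y2 v2 -> y1 0 = y2 0 -> v1 0 = v2 0 -> 0 <= B ->
  (forall t, 0 <= t <= T -> Rabs (p1 t) <= B /\ Rabs ((p1 t - p2 t) * y2 t) <= d) ->
  forall t, 0 <= t <= T -> Rabs (y1 t - y2 t) <= d * exp ((B + 2) * T).
Proof.
  intros [Hy1 Hv1] [Hy2 Hv2] E1 E2 HB Hb t Ht.
  assert (Hd : 0 <= d)
    by (destruct (Hb t Ht) as [_ H]; pose proof (Rabs_pos ((p1 t - p2 t) * y2 t)); lra).
  assert (E := energy_estimate (fun s => y1 s - y2 s) (fun s => v1 s - v2 s)
                 (fun s => p1 s * y1 s - p2 s * y2 s) B d T HB Hd).
  apply abs_le_of_sq_le; [exact Hd | apply exp_ge1; nra|].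
  assert (Hmono : exp ((B + 2) * t) <= exp ((B + 2) * T)) by (apply exp_le_compat; nra).
  enough ((y1 t - y2 t) ^ 2 + (v1 t - v2 t) ^ 2 <= d ^ 2 * exp ((B + 2) * t)).
  { pose proof (pow2_ge_0 (v1 t - v2 t)). pose proof (pow2_ge_0 d).
    apply Rmult_le_compat_l with (r := d ^ 2) in Hmono; lra. }
  replace (d ^ 2) with ((y1 0 - y2 0) ^ 2 + (v1 0 - v2 0) ^ 2 + d ^ 2) by (rewrite E1, E2; ring).
  apply E; [|exact Ht]. intros s Hs. destruct (Hb s Hs) as [Hp Hdiff].
  split; [apply (is_derive_minus y1 y2); auto | split; [apply (is_derive_minus v1 v2); auto|]].
  replace (p1 s * y1 s - p2 s * y2 s) with (p1 s * (y1 s - y2 s) + (p1 s - p2 s) * y2 s) by ring.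
  eapply Rle_trans; [apply Rabs_triang|]. rewrite Rabs_mult.
  apply Rplus_le_compat; [apply Rmult_le_compat_r; [apply Rabs_pos | exact Hp] | exact Hdiff].
Qed.

Lemma positive_near_zero (p y v : R -> R) (B Y T : R) :
  lin_sol p y v -> y 0 = 0 -> v 0 = 1 ->
  (forall t, 0 <= t <= T -> Rabs (p t) <= B /\ Rabs (y t) <= Y) ->
  forall t, 0 < t <= T -> t <= 1 / (2 * (B * Y + 1)) -> 0 < y t.
Proof.
  intros [Hy Hv] Hy0 Hv0 Hb t Ht Ht_small.
  assert (HBY : 0 <= B /\ 0 <= Y).
  { destruct (Hb 0 ltac:(lra)). pose proof (Rabs_pos (p 0)). pose proof (Rabs_pos (y 0)). lra. }
  assert (Hsmall : t * (B * Y) <= 1 / 2).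
  { assert (0 <= B * Y) by nra.
    apply Rle_trans with (1 / (2 * (B * Y + 1)) * (B * Y)); [apply Rmult_le_compat_r; lra|].
    apply Rmult_le_reg_l with (2 * (B * Y + 1)); [nra|]. field_simplify; nra. }
  assert (Hv_ge : forall s, 0 <= s <= t -> 1 / 2 <= v s).
  { intros s Hs.
    assert (H : Rabs (v s - v 0) <= B * Y * s - B * Y * 0).
    { apply (abs_sub_le_of_is_derive v (fun u => p u * y u) (fun u => B * Y * u) (fun _ => B * Y));
        [lra | intros; apply Hv | intros; auto_derive; [exact I | ring] |].
      intros u Hu. destruct (Hb u ltac:(lra)) as [H1 H2]. rewrite Rabs_mult.
      apply Rmult_le_compat; auto using Rabs_pos. }
    rewrite Hv0, Rmult_0_r, Rminus_0_r in H. apply Rabs_le_between in H.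
    assert (B * Y * s <= t * (B * Y)).
    { rewrite Rmult_comm. apply Rmult_le_compat_r; nra. }
    lra. }
  assert (Hmono : y 0 - 0 / 2 <= y t - t / 2).
  { apply (le_of_is_derive_nonneg (fun u => y u - u / 2) (fun u => v u - 1 / 2)); [lra| |].
    - intros x _. apply (is_derive_minus y (fun u => u / 2));
        [apply Hy | auto_derive; [exact I | field]].
    - intros x Hx. pose proof (Hv_ge x Hx). lra. }
  lra.
Qed.

Lemma positive_of_nonneg_coeff (p y v : R -> R) (T : R) :
  (forall x, continuous p x) -> lin_sol p y v -> y 0 = 0 -> v 0 = 1 ->
  (forall t, 0 <= t <= T -> 0 <= p t) -> forall t, 0 < t <= T -> 0 < y t.
Proof.
  intros Hp Hs Hy0 Hv0 Hpos t Ht. pose proof Hs as [Hy Hv].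
  (* [(y v)' = v^2 + p y^2 >= 0], so [y^2] is nondecreasing, and [y > 0] just after 0. *)
  assert (Hyv : forall u, 0 <= u <= T -> 0 <= y u * v u).
  { intros u Hu. replace 0 with (y 0 * v 0) by (rewrite Hy0; ring).
    apply (le_of_is_derive_nonneg (fun u => y u * v u) (fun u => v u * v u + p u * (y u * y u)));
      [lra| |].
    - intros x _.
      auto_derive;
        [split; [exists (v x); apply Hy | split; [exists (p x * y x); apply Hv | exact I]]|].
      rewrite_Derive (Hy x). rewrite_Derive (Hv x). ring.
    - intros x Hx. pose proof (Hpos x ltac:(lra)). nra. }
  assert (Hsq : forall a b, 0 <= a <= b -> b <= T -> y a * y a <= y b * y b).
  { intros a b Hab HbT.
    apply (le_of_is_derive_nonneg (fun u => y u * y u) (fun u => 2 * (y u * v u)));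
      [lra| |].
    - intros x _.
      auto_derive; [split; [exists (v x); apply Hy | split; [exists (v x); apply Hy | exact I]]|].
      rewrite_Derive (Hy x). ring.
    - intros x Hx. pose proof (Hyv x ltac:(lra)). lra. }
  assert (Hyc : forall x, continuous y x)
    by (intros x; exact (continuous_of_is_derive _ _ _ (Hy x))).
  destruct (continuous_bounded p 0 T Hp) as [B [HB HBb]].
  destruct (continuous_bounded y 0 T Hyc) as [Y [HY HYb]].
  set (t1 := Rmin t (1 / (2 * (B * Y + 1)))).
  assert (Ht1 : 0 < t1 <= t).
  { split; [apply Rmin_pos; [lra | apply Rdiv_lt_0_compat; nra] | apply Rmin_l]. }
  assert (Hy1 : 0 < y t1).
  { apply (positive_near_zero p y v B Y T Hs Hy0 Hv0); [| lra | apply Rmin_r].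
    intros s Hs'. split; [apply HBb | apply HYb]; lra. }
  destruct (Rlt_le_dec 0 (y t)) as [Hlt | Hle]; [exact Hlt|].
  destruct (IVT_cor y t1 t (fun x => proj2 (continuity_pt_filterlim _ _) (Hyc x)) ltac:(lra))
    as [z [Hz Hz0]]; [nra|].
  pose proof (Hsq t1 z ltac:(lra) ltac:(lra)). rewrite Hz0 in H. nra.
Qed.

(** * Existence by Picard iteration *)

Lemma is_derive_pow_fact (c : R) (m : nat) (x : R) :
  is_derive (fun u => c * u ^ S m / INR (fact (S m))) x (c * x ^ m / INR (fact m)).
Proof.
  auto_derive; [exact I|].
  change (fact m + m * fact m)%nat with (fact (S m)).
  change (match m with 0%nat => 1 | S _ => INR m + 1 end) with (INR (S m)).
  rewrite fact_simpl, mult_INR.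
  assert (INR (fact m) <> 0) by apply INR_fact_neq_0.
  assert (INR (S m) <> 0) by (apply not_0_INR; lia).
  field. auto.
Qed.

Lemma abs_le_of_between_0 (t u : R) : Rmin 0 t <= u <= Rmax 0 t -> Rabs u <= Rabs t.
Proof.
  unfold Rmin, Rmax. destruct (Rle_dec 0 t); intros Hu.
  - rewrite !Rabs_pos_eq by lra. lra.
  - rewrite !Rabs_left1 by lra. lra.
Qed.

Lemma abs_le_of_derive_pow_bound (G g : R -> R) (c : R) (m : nat) (t : R) : G 0 = 0 ->
  (forall u, Rmin 0 t <= u <= Rmax 0 t -> is_derive G u (g u)) ->
  (forall u, Rmin 0 t <= u <= Rmax 0 t -> Rabs (g u) <= c * Rabs u ^ m / INR (fact m)) ->
  Rabs (G t) <= c * Rabs t ^ S m / INR (fact (S m)).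
Proof.
  intros H0 HG Hb.
  set (P := fun u => c * u ^ S m / INR (fact (S m))).
  assert (HP0 : P 0 = 0) by (unfold P; simpl; unfold Rdiv; ring).
  destruct (Rle_dec 0 t) as [Ht | Ht].
  - rewrite Rmin_left, Rmax_right in HG, Hb by lra. rewrite (Rabs_pos_eq t) by lra.
    replace (G t) with (G t - G 0) by (rewrite H0; ring).
    replace (c * t ^ S m / INR (fact (S m))) with (P t - P 0) by (rewrite HP0; unfold P; ring).
    apply (abs_sub_le_of_is_derive G g P (fun u => c * u ^ m / INR (fact m))); auto.
    + intros u _. apply is_derive_pow_fact.
    + intros u Hu. specialize (Hb u Hu). rewrite (Rabs_pos_eq u) in Hb by lra. exact Hb.
  - rewrite Rmin_right, Rmax_left in HG, Hb by lra. rewrite (Rabs_left t) by lra.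
    replace (G t) with (- (G 0 - G t)) by (rewrite H0; ring). rewrite Rabs_Ropp.
    replace (c * (- t) ^ S m / INR (fact (S m))) with ((- P (0 - 0)) - (- P (0 - t)))
      by (rewrite Rminus_0_r, HP0, Rminus_0_l; unfold P; ring).
    apply (abs_sub_le_of_is_derive G g (fun u => - P (0 - u))
             (fun u => c * (0 - u) ^ m / INR (fact m))); auto; [lra| |].
    + intros u _. rewrite <- (Ropp_involutive (c * (0 - u) ^ m / INR (fact m))).
      apply (is_derive_opp (fun u => P (0 - u))), is_derive_reflect, is_derive_pow_fact.
    + intros u Hu. specialize (Hb u Hu). rewrite (Rabs_left1 u), <- Rminus_0_l in Hb by lra.
      exact Hb.
Qed.

Lemma pow_fact_majorant (K r y : R) (n e : nat) : 0 <= K -> Rabs y <= r -> (e <= 1)%nat ->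
  K ^ n * Rabs y ^ (2 * n + e) / INR (fact (2 * n + e)) <= (r + 1) * (K * r * r) ^ n / INR (fact n).
Proof.
  intros HK Hy He.
  assert (Hr : 0 <= r) by (pose proof (Rabs_pos y); lra).
  assert (Hpow : Rabs y ^ (2 * n + e) <= (r + 1) * (r * r) ^ n).
  { apply Rle_trans with (r ^ (2 * n + e)); [apply pow_incr; split; [apply Rabs_pos | exact Hy]|].
    rewrite pow_add, pow_mult, Rmult_comm. replace (r ^ 2) with (r * r) by ring.
    apply Rmult_le_compat_r; [apply pow_le; nra|].
    destruct e as [|[|e]]; simpl; lra || lia. }
  assert (Hfact : / INR (fact (2 * n + e)) <= / INR (fact n)).
  { apply Rinv_le_contravar; [apply INR_fact_lt_0 | apply le_INR, fact_le; lia]. }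
  assert (0 <= K ^ n) by (apply pow_le; lra).
  assert (0 <= / INR (fact (2 * n + e))) by (left; apply Rinv_0_lt_compat, INR_fact_lt_0).
  assert (0 <= (r + 1) * (r * r) ^ n) by (apply Rmult_le_pos; [lra | apply pow_le; nra]).
  unfold Rdiv. rewrite !Rpow_mult_distr.
  replace ((r + 1) * (K ^ n * r ^ n * r ^ n) * / INR (fact n))
    with (K ^ n * ((r + 1) * (r * r) ^ n) * / INR (fact n)) by (rewrite Rpow_mult_distr; ring).
  apply Rmult_le_compat; [apply Rmult_le_pos; [exact H | apply pow_le, Rabs_pos] | exact H0 | |
                         exact Hfact].
  apply Rmult_le_compat_l; assumption.
Qed.

Lemma exp_majorant_cv (a x : R) : 0 <= a -> 0 <= x ->
  Un_cv (fun n => sum_f_R0 (fun k => Rabs (a * x ^ k / INR (fact k))) n) (a * exp x).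
Proof.
  intros Ha Hx.
  assert (Hexp : Un_cv (fun n => sum_f_R0 (fun k => / INR (fact k) * x ^ k) n) (exp x))
    by exact (proj2_sig (exist_exp x)).
  assert (Hcst : Un_cv (fun _ => a) a).
  { intros eps Heps. exists 0%nat. intros. unfold Rdist. rewrite Rminus_diag, Rabs_R0. exact Heps. }
  intros eps Heps.
  destruct (CV_mult (fun _ => a) _ a (exp x) Hcst Hexp eps Heps) as [N HN].
  exists N. intros n Hn. specialize (HN n Hn). rewrite scal_sum in HN.
  rewrite (sum_eq _ (fun k => / INR (fact k) * x ^ k * a)); [exact HN|].
  intros k _. rewrite Rabs_pos_eq; [unfold Rdiv; ring|].
  apply Rmult_le_pos; [apply Rmult_le_pos; [exact Ha | apply pow_le, Hx]|].
  left; apply Rinv_0_lt_compat, INR_fact_lt_0.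
Qed.

Lemma CVN_R_of_pow_fact_bound (fn : nat -> R -> R) (e : nat) : (e <= 1)%nat ->
  (forall r, exists K, 0 <= K /\ forall n t, - r <= t <= r ->
     Rabs (fn n t) <= K ^ n * Rabs t ^ (2 * n + e) / INR (fact (2 * n + e))) ->
  CVN_R fn.
Proof.
  intros He Hb r. destruct (constructive_indefinite_description _ (Hb r)) as [K [HK HKb]].
  exists (fun n => (r + 1) * (K * r * r) ^ n / INR (fact n)), ((r + 1) * exp (K * r * r)).
  pose proof (cond_pos r). split.
  - apply exp_majorant_cv; [lra | apply Rmult_le_pos; nra].
  - intros n y Hy. unfold Boule in Hy. rewrite Rminus_0_r in Hy.
    eapply Rle_trans; [apply HKb; apply Rabs_le_between; lra|].
    apply pow_fact_majorant; auto; lra.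
Qed.

Lemma CVN_R_limit (fn gn : nat -> R -> R) : CVN_R fn -> (forall n, SP fn n = gn n) ->
  exists f, (forall t, Un_cv (fun n => gn n t) (f t)) /\ (forall r : posreal, CVU gn f 0 r).
Proof.
  intros Hcvn Hgn. pose (cv := CVN_R_CVS fn Hcvn). exists (SFL fn cv). split.
  - intros t eps Heps. unfold SFL. destruct (cv t) as [l Hl]. destruct (Hl eps Heps) as [N HN].
    exists N. intros n Hn. rewrite <- Hgn. apply HN, Hn.
  - intros r eps Heps. destruct (CVN_CVU fn cv r (Hcvn r) eps Heps) as [N HN].
    exists N. intros n t Hn Ht. rewrite <- Hgn. apply HN; assumption.
Qed.

Lemma cv_const_eq (u : nat -> R) (c l : R) : (forall n, u n = c) -> Un_cv u l -> l = c.
Proof.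
  intros Hc Hl. apply (UL_sequence u); [exact Hl|].
  intros eps Heps. exists 0%nat. intros n _. rewrite Hc. unfold Rdist.
  rewrite Rminus_diag, Rabs_R0. exact Heps.
Qed.

Lemma CVU_mult_bounded (fn : nat -> R -> R) (f g : R -> R) (r : posreal) (K : R) :
  CVU fn f 0 r -> (forall y, Boule 0 r y -> Rabs (g y) <= K) ->
  CVU (fun n y => g y * fn n y) (fun y => g y * f y) 0 r.
Proof.
  intros Hcv Hg eps Heps.
  assert (HK : 0 <= K).
  { assert (H0 : Boule 0 r 0) by (unfold Boule; rewrite Rminus_0_r, Rabs_R0; apply cond_pos).
    pose proof (Hg 0 H0). pose proof (Rabs_pos (g 0)). lra. }
  destruct (Hcv (eps / (K + 1))) as [N HN]; [apply Rdiv_lt_0_compat; lra|].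
  exists N. intros n y Hn Hy.
  rewrite <- Rmult_minus_distr_l, Rabs_mult.
  pose proof (Hg y Hy). pose proof (HN n y Hn Hy). pose proof (Rabs_pos (g y)).
  apply Rle_lt_trans with (K * (eps / (K + 1))); [apply Rmult_le_compat; auto using Rabs_pos; lra|].
  apply Rmult_lt_reg_l with (K + 1); [lra|]. field_simplify; [nra | lra].
Qed.

Lemma is_derive_CVU_limit (fn dfn : nat -> R -> R) (f df : R -> R) :
  (forall n t, is_derive (fn n) t (dfn n t)) ->
  (forall t, Un_cv (fun n => fn n t) (f t)) ->
  (forall r : posreal, CVU dfn df 0 r) ->
  (forall n t, continuity_pt (dfn n) t) ->
  forall t, is_derive f t (df t) /\ continuity_pt df t.
Proof.
  intros Hd Hcv Hu Hc t.
  assert (Hr : 0 < Rabs t + 1) by (pose proof (Rabs_pos t); lra).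
  set (r := mkposreal _ Hr).
  assert (Hball : Boule 0 r t) by (unfold Boule; simpl; rewrite Rminus_0_r; lra).
  assert (Hdf : forall y, Boule 0 r y -> continuity_pt df y)
    by (apply (CVU_continuity dfn df 0 r (Hu r)); intros; apply Hc).
  split; [|apply Hdf, Hball].
  apply is_derive_Reals, (derivable_pt_lim_CVU fn dfn f df t 0 r Hball); auto.
  intros y n _. apply is_derive_Reals, Hd.
Qed.

Fixpoint picard (p : R -> R) (n : nat) : (R -> R) * (R -> R) :=
  match n with
  | O => (fun _ => 0, fun _ => 0)
  | S m => let v := fun t => 1 + RInt (fun u => p u * fst (picard p m) u) 0 t in
           (fun t => RInt v 0 t, v)
  end.

Section Picard.

Variable p : R -> R.
Hypothesis p_cont : forall x, continuous p x.

Lemma picard_snd_is_derive (n : nat) : (forall t, continuous (fst (picard p n)) t) ->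
  forall t, is_derive (snd (picard p (S n))) t (p t * fst (picard p n) t).
Proof.
  intros Hc t. simpl. rewrite <- (Rplus_0_l (p t * _)).
  apply (is_derive_plus (fun _ => 1)); [apply (@is_derive_const R_AbsRing R_NormedModule)|].
  apply (is_derive_RInt_0 (fun u => p u * fst (picard p n) u)).
  intros x. apply (continuous_mult p); auto.
Qed.

Lemma picard_is_derive (n : nat) :
  (forall t, is_derive (fst (picard p n)) t (snd (picard p n) t)) /\
  (forall t, is_derive (snd (picard p (S n))) t (p t * fst (picard p n) t)).
Proof.
  induction n as [|n [_ IH]].
  - split; [intros t; simpl; apply (@is_derive_const R_AbsRing R_NormedModule)|].
    apply picard_snd_is_derive. intros t. apply continuous_const.
  - assert (HY : forall t, is_derive (fst (picard p (S n))) t (snd (picard p (S n)) t)).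
    { intros t. apply is_derive_RInt_0. intros x. exact (continuous_of_is_derive _ _ _ (IH x)). }
    split; [exact HY|].
    apply picard_snd_is_derive. intros t. exact (continuous_of_is_derive _ _ _ (HY t)).
Qed.

Lemma picard_fst_0 (n : nat) : fst (picard p n) 0 = 0.
Proof. destruct n; simpl; [reflexivity | apply (@RInt_point R_CompleteNormedModule)]. Qed.

Lemma picard_snd_0 (n : nat) : snd (picard p (S n)) 0 = 1.
Proof. simpl. rewrite RInt_point. apply Rplus_0_r. Qed.

Lemma picard_snd_1 (t : R) : snd (picard p 1) t = 1.
Proof.
  simpl. rewrite (RInt_ext _ (fun _ => 0)) by (intros; simpl; ring).
  rewrite RInt_const. unfold scal; simpl; unfold mult; simpl. ring.
Qed.

Definition picard_dY (n : nat) (t : R) := fst (picard p (S n)) t - fst (picard p n) t.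
Definition picard_dV (n : nat) (t : R) := snd (picard p (S n)) t - snd (picard p n) t.

Lemma picard_dY_is_derive (n : nat) (t : R) : is_derive (picard_dY n) t (picard_dV n t).
Proof.
  apply (is_derive_minus (fst (picard p (S n))) (fst (picard p n))); apply picard_is_derive.
Qed.

Lemma picard_dV_is_derive (n : nat) (t : R) :
  is_derive (picard_dV (S n)) t (p t * picard_dY n t).
Proof.
  unfold picard_dY. rewrite Rmult_minus_distr_l.
  apply (is_derive_minus (snd (picard p (S (S n)))) (snd (picard p (S n)))); apply picard_is_derive.
Qed.

Lemma picard_dY_0 (n : nat) : picard_dY n 0 = 0.
Proof. unfold picard_dY. rewrite !picard_fst_0. ring. Qed.

Lemma picard_dV_0 (n : nat) : picard_dV (S n) 0 = 0.
Proof. unfold picard_dV. rewrite !picard_snd_0. ring. Qed.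

Section IncrementBound.

Variables (K r : R).
Hypothesis p_bound : forall u, - r <= u <= r -> Rabs (p u) <= K.

Lemma picard_dY_bound_of_dV (n : nat) :
  (forall t, - r <= t <= r ->
     Rabs (picard_dV n t) <= K ^ n * Rabs t ^ (2 * n) / INR (fact (2 * n))) ->
  forall t, - r <= t <= r ->
  Rabs (picard_dY n t) <= K ^ n * Rabs t ^ S (2 * n) / INR (fact (S (2 * n))).
Proof.
  intros HV t Ht. apply (abs_le_of_derive_pow_bound _ (picard_dV n)).
  - apply picard_dY_0.
  - intros u _. apply picard_dY_is_derive.
  - intros u Hu. pose proof (abs_le_of_between_0 t u Hu). apply HV.
    apply Rabs_le_between. apply Rabs_le_between in Ht. lra.
Qed.

Lemma picard_increment_bound (n : nat) (t : R) : - r <= t <= r ->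
  Rabs (picard_dV n t) <= K ^ n * Rabs t ^ (2 * n) / INR (fact (2 * n)) /\
  Rabs (picard_dY n t) <= K ^ n * Rabs t ^ S (2 * n) / INR (fact (S (2 * n))).
Proof.
  revert t. induction n as [|n IH]; intros t Ht.
  - assert (HV : forall t, Rabs (picard_dV 0 t) <= K ^ 0 * Rabs t ^ (2 * 0) / INR (fact (2 * 0))).
    { intros s. unfold picard_dV. rewrite picard_snd_1. simpl. rewrite Rminus_0_r, Rabs_R1. lra. }
    split; [apply HV | apply picard_dY_bound_of_dV; auto].
  - assert (HV : forall t, - r <= t <= r ->
              Rabs (picard_dV (S n) t) <= K ^ S n * Rabs t ^ (2 * S n) / INR (fact (2 * S n))).
    { clear t Ht. intros t Ht. replace (2 * S n)%nat with (S (S (2 * n))) by lia.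
      apply (abs_le_of_derive_pow_bound _ (fun t => p t * picard_dY n t)).
      - apply picard_dV_0.
      - intros u _. apply picard_dV_is_derive.
      - intros u Hu. pose proof (abs_le_of_between_0 t u Hu) as Hut.
        assert (Hu' : - r <= u <= r) by (apply Rabs_le_between; apply Rabs_le_between in Ht; lra).
        destruct (IH u Hu') as [_ HY]. rewrite Rabs_mult, <- tech_pow_Rmult.
        unfold Rdiv in *. rewrite !Rmult_assoc. rewrite Rmult_assoc in HY.
        apply Rmult_le_compat; auto using Rabs_pos. }
    split; [apply HV, Ht | apply picard_dY_bound_of_dV; auto].
Qed.

End IncrementBound.

Lemma picard_dY_CVN : CVN_R picard_dY.
Proof.
  apply (CVN_R_of_pow_fact_bound _ 1); [lia|]. intros r.
  destruct (continuous_bounded p (- r) r p_cont) as [K [HK HKb]].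
  exists K. split; [exact HK|]. intros n t Ht.
  rewrite Nat.add_1_r. apply (picard_increment_bound K r HKb n t Ht).
Qed.

Lemma picard_dV_CVN : CVN_R picard_dV.
Proof.
  apply (CVN_R_of_pow_fact_bound _ 0); [lia|]. intros r.
  destruct (continuous_bounded p (- r) r p_cont) as [K [HK HKb]].
  exists K. split; [exact HK|]. intros n t Ht.
  rewrite Nat.add_0_r. apply (picard_increment_bound K r HKb n t Ht).
Qed.

Lemma SP_picard_dY (n : nat) : SP picard_dY n = fst (picard p (S n)).
Proof.
  extensionality x. unfold SP. induction n as [|n IH]; simpl sum_f_R0.
  - unfold picard_dY. simpl (fst (picard p 0)). cbv beta. ring.
  - rewrite IH. unfold picard_dY. ring.
Qed.

Lemma SP_picard_dV (n : nat) : SP picard_dV n = snd (picard p (S n)).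
Proof.
  extensionality x. unfold SP. induction n as [|n IH]; simpl sum_f_R0.
  - unfold picard_dV. simpl (snd (picard p 0)). cbv beta. ring.
  - rewrite IH. unfold picard_dV. ring.
Qed.

Theorem lin_sol_exists : exists y v, lin_sol p y v /\ y 0 = 0 /\ v 0 = 1.
Proof.
  destruct (CVN_R_limit _ _ picard_dY_CVN SP_picard_dY) as [y [Hy_cv Hy_cvu]].
  destruct (CVN_R_limit _ _ picard_dV_CVN SP_picard_dV) as [v [Hv_cv Hv_cvu]].
  assert (Hcont : forall n t, continuity_pt (fst (picard p n)) t).
  { intros n t. apply continuity_pt_filterlim.
    exact (continuous_of_is_derive _ _ _ (proj1 (picard_is_derive n) t)). }
  assert (Hy : forall t, is_derive y t (v t) /\ continuity_pt v t).
  { apply (is_derive_CVU_limit (fun n => fst (picard p (S n))) (fun n => snd (picard p (S n))));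
      auto.
    - intros n t. apply picard_is_derive.
    - intros n t. apply continuity_pt_filterlim,
        (continuous_of_is_derive _ _ _ (proj2 (picard_is_derive n) t)). }
  exists y, v. split; [split|split].
  - intros t. apply Hy.
  - apply (is_derive_CVU_limit (fun n => snd (picard p (S (S n))))
             (fun n t => p t * fst (picard p (S n)) t)).
    + intros n t. apply picard_is_derive.
    + intros t eps Heps. destruct (Hv_cv t eps Heps) as [N HN].
      exists N. intros n Hn. apply HN. lia.
    + intros r. destruct (continuous_bounded p (- r) r p_cont) as [K [_ HKb]].
      apply (CVU_mult_bounded _ _ _ r K (Hy_cvu r)).
      intros u Hu. unfold Boule in Hu. rewrite Rminus_0_r in Hu. apply HKb, Rabs_le_between. lra.
    + intros n t. apply continuity_pt_mult; [apply continuity_pt_filterlim, p_cont | apply Hcont].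
  - exact (cv_const_eq _ 0 _ (fun n => picard_fst_0 (S n)) (Hy_cv 0)).
  - exact (cv_const_eq _ 1 _ picard_snd_0 (Hv_cv 0)).
Qed.

End Picard.

(** * Shooting in the spectral parameter *)

Section FirstTouching.

Variables (Y : R -> R -> R) (L T delta C : R).
Hypothesis L_ge0 : 0 <= L.
Hypothesis C_ge0 : 0 <= C.
Hypothesis delta_range : 0 < delta <= T.
Hypothesis Y_lipschitz : forall lam mu t, 0 <= lam <= L -> 0 <= mu <= L -> 0 <= t <= T ->
  Rabs (Y lam t - Y mu t) <= C * Rabs (lam - mu).
Hypothesis Y_pos_near0 : forall lam t, 0 <= lam <= L -> 0 < t <= delta -> 0 < Y lam t.
Hypothesis Y_cont : forall lam t, continuity_pt (Y lam) t.

Definition pos_on (lam : R) : Prop := forall t, 0 < t <= T -> 0 < Y lam t.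

Hypothesis pos_L : pos_on L.
Hypothesis not_pos_0 : ~ pos_on 0.

Lemma pos_on_infimum : exists ls, 0 <= ls <= L /\
  (forall mu, 0 <= mu <= L -> pos_on mu -> ls <= mu) /\
  (forall eps, 0 < eps -> exists mu, 0 <= mu <= L /\ pos_on mu /\ mu < ls + eps).
Proof.
  set (lower := fun x => 0 <= x <= L /\ forall mu, 0 <= mu <= L -> pos_on mu -> x <= mu).
  destruct (completeness lower) as [ls [Hub Hlub]].
  - exists L. intros x [Hx _]. lra.
  - exists 0. split; [lra | intros mu Hmu _; lra].
  - assert (Hls : 0 <= ls <= L).
    { split; [apply Hub; split; [lra | intros mu Hmu _; lra]|].
      apply Hlub. intros x [Hx _]. lra. }
    assert (Hle : forall mu, 0 <= mu <= L -> pos_on mu -> ls <= mu).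
    { intros mu Hmu Pmu. apply Hlub. intros x [_ Hx]. apply Hx; auto. }
    exists ls. split; [exact Hls | split; [exact Hle|]].
    intros eps Heps. apply NNPP. intros Hn.
    assert (Hall : forall mu, 0 <= mu <= L -> pos_on mu -> ls + eps <= mu).
    { intros mu Hmu Pmu. apply Rnot_lt_le. intros Hlt. apply Hn. exists mu. auto. }
    assert (Hlow : lower (Rmin (ls + eps) L)).
    { split; [split; [apply Rmin_glb; lra | apply Rmin_r]|].
      intros mu Hmu Pmu. apply Rle_trans with (ls + eps); [apply Rmin_l | auto]. }
    pose proof (Hub _ Hlow). pose proof (Hall L ltac:(lra) pos_L).
    unfold Rmin in *. destruct (Rle_dec (ls + eps) L); lra.
Qed.

Variable ls : R.
Hypothesis ls_range : 0 <= ls <= L.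
Hypothesis ls_lower : forall mu, 0 <= mu <= L -> pos_on mu -> ls <= mu.
Hypothesis ls_approx : forall eps, 0 < eps -> exists mu, 0 <= mu <= L /\ pos_on mu /\ mu < ls + eps.

Lemma infimum_nonneg : forall t, 0 < t <= T -> 0 <= Y ls t.
Proof.
  intros t Ht. apply Rnot_lt_le. intros Hneg.
  destruct (ls_approx (- Y ls t / (C + 1))) as [mu [Hmu [Pmu Hlt]]];
    [apply Rdiv_lt_0_compat; lra|].
  pose proof (ls_lower mu Hmu Pmu).
  pose proof (Y_lipschitz mu ls t Hmu ls_range ltac:(lra)) as Hlip.
  rewrite (Rabs_pos_eq (mu - ls)) in Hlip by lra. apply Rabs_le_between in Hlip.
  assert (C * (mu - ls) < - Y ls t).
  { apply Rle_lt_trans with (C * (- Y ls t / (C + 1))); [apply Rmult_le_compat_l; lra|].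
    apply Rmult_lt_reg_l with (C + 1); [lra|]. field_simplify; nra. }
  pose proof (Pmu t Ht). lra.
Qed.

Lemma infimum_not_pos : ~ pos_on ls.
Proof.
  intros Pls. destruct (Req_dec ls 0) as [Hls0 | Hls0]; [apply not_pos_0; now rewrite <- Hls0|].
  destruct (continuity_ab_min (Y ls) delta T ltac:(lra) (fun c _ => Y_cont ls c))
    as [m0 [Hm0 Hm0T]].
  set (m := Y ls m0). assert (Hm : 0 < m) by (apply Pls; lra).
  set (eta := Rmin ls (m / (2 * (C + 1)))).
  assert (Heta : 0 < eta <= ls /\ eta <= m / (2 * (C + 1))).
  { split; [split; [apply Rmin_pos; [lra | apply Rdiv_lt_0_compat; lra] | apply Rmin_l]|].
    apply Rmin_r. }
  assert (Pless : pos_on (ls - eta)).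
  { intros t Ht. destruct (Rle_dec t delta) as [Htd | Htd]; [apply Y_pos_near0; lra|].
    pose proof (Y_lipschitz (ls - eta) ls t ltac:(lra) ls_range ltac:(lra)) as Hlip.
    replace (ls - eta - ls) with (- eta) in Hlip by ring.
    rewrite Rabs_Ropp, (Rabs_pos_eq eta) in Hlip by lra.
    apply Rabs_le_between in Hlip. pose proof (Hm0 t ltac:(lra)). fold m in H.
    assert (C * eta < m).
    { apply Rle_lt_trans with (C * (m / (2 * (C + 1)))); [apply Rmult_le_compat_l; lra|].
      apply Rmult_lt_reg_l with (2 * (C + 1)); [lra|]. field_simplify; nra. }
    lra. }
  pose proof (ls_lower (ls - eta) ltac:(lra) Pless). lra.
Qed.

End FirstTouching.

Lemma first_touching (Y : R -> R -> R) (L T delta C : R) :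
  0 <= L -> 0 <= C -> 0 < delta <= T ->
  (forall lam mu t, 0 <= lam <= L -> 0 <= mu <= L -> 0 <= t <= T ->
     Rabs (Y lam t - Y mu t) <= C * Rabs (lam - mu)) ->
  (forall lam t, 0 <= lam <= L -> 0 < t <= delta -> 0 < Y lam t) ->
  (forall lam t, continuity_pt (Y lam) t) ->
  pos_on Y T L -> ~ pos_on Y T 0 ->
  exists ls t0, 0 <= ls <= L /\ (forall t, 0 < t <= T -> 0 <= Y ls t) /\
    0 < t0 <= T /\ Y ls t0 = 0.
Proof.
  intros HL HC Hdelta Hlip Hnear Hcont PL NP0.
  destruct (pos_on_infimum Y L T HL PL) as [ls [Hls [Hlow Happ]]].
  pose proof (infimum_nonneg Y L T C HC Hlip ls Hls Hlow Happ) as Hnn.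
  pose proof (infimum_not_pos Y L T delta C HC Hdelta Hlip Hnear Hcont NP0 ls Hls Hlow) as Hnp.
  apply not_all_ex_not in Hnp as [t0 Ht0]. exists ls, t0.
  apply imply_to_and in Ht0 as [Ht0 Hy]. repeat split; auto; try lra.
  pose proof (Hnn t0 Ht0). lra.
Qed.

(* [D y'' + q y = lam y] is [lin_sol (eig_coeff q D lam) y y']. *)
Definition eig_coeff (q : R -> R) (D lam t : R) : R := (lam - q t) / D.

Lemma eig_coeff_continuous (q : R -> R) (D lam x : R) : (forall x, continuous q x) ->
  continuous (eig_coeff q D lam) x.
Proof.
  intros Hq. unfold eig_coeff. apply (continuous_scal_l (fun t => lam - q t) (/ D)).
  apply (continuous_minus (fun _ => lam) q); [apply continuous_const | apply Hq].
Qed.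

Lemma eig_coeff_reflect (q : R -> R) (D lam a : R) : (forall t, q (2 * a - t) = q t) ->
  forall t, eig_coeff q D lam (2 * a - t) = eig_coeff q D lam t.
Proof. intros Hq t. unfold eig_coeff. now rewrite Hq. Qed.

Lemma eig_family_exists (q : R -> R) (D : R) : (forall x, continuous q x) ->
  exists Y V : R -> R -> R, forall lam,
    lin_sol (eig_coeff q D lam) (Y lam) (V lam) /\ Y lam 0 = 0 /\ V lam 0 = 1.
Proof.
  intros Hq.
  assert (Hex : forall lam, exists yv : (R -> R) * (R -> R),
            lin_sol (eig_coeff q D lam) (fst yv) (snd yv) /\ fst yv 0 = 0 /\ snd yv 0 = 1).
  { intros lam. destruct (lin_sol_exists (eig_coeff q D lam)) as [y [v H]];
      [intros x; apply eig_coeff_continuous, Hq | now exists (y, v)]. }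
  exists (fun lam => fst (proj1_sig (constructive_indefinite_description _ (Hex lam)))),
         (fun lam => snd (proj1_sig (constructive_indefinite_description _ (Hex lam)))).
  intros lam. exact (proj2_sig (constructive_indefinite_description _ (Hex lam))).
Qed.

Section EigenFamily.

Variables (q : R -> R) (D T Kq : R) (Y V : R -> R -> R).
Hypothesis D_pos : 0 < D.
Hypothesis T_pos : 0 < T.
Hypothesis q_cont : forall x, continuous q x.
Hypothesis q_bound : forall t, 0 <= t <= T -> Rabs (q t) <= Kq.
Hypothesis family : forall lam,
  lin_sol (eig_coeff q D lam) (Y lam) (V lam) /\ Y lam 0 = 0 /\ V lam 0 = 1.

(* [eig_coeff q D L >= 0] on [0, T]; [B] bounds [eig_coeff q D lam] there for
   [0 <= lam <= L], and [Ymax] the corresponding solutions. *)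
Let L := Kq + 1.
Let B := (L + Kq) / D.
Let Ymax := exp ((B + 2) * T).

Let Kq_ge0 : 0 <= Kq.
Proof. pose proof (q_bound 0 ltac:(lra)). pose proof (Rabs_pos (q 0)). lra. Qed.

Let B_ge0 : 0 <= B.
Proof.
  pose proof Kq_ge0. apply Rmult_le_pos; [unfold L; lra | left; apply Rinv_0_lt_compat, D_pos].
Qed.

Let Ymax_ge1 : 1 <= Ymax.
Proof. pose proof B_ge0. apply exp_ge1. nra. Qed.

Lemma eig_coeff_bound (lam t : R) : 0 <= lam <= L -> 0 <= t <= T ->
  Rabs (eig_coeff q D lam t) <= B.
Proof.
  intros Hl Ht. unfold eig_coeff, B, Rdiv.
  rewrite Rabs_mult, (Rabs_pos_eq (/ D)) by (left; apply Rinv_0_lt_compat, D_pos).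
  apply Rmult_le_compat_r; [left; apply Rinv_0_lt_compat, D_pos|].
  pose proof (q_bound t Ht) as Hqt. apply Rabs_le_between in Hqt. apply Rabs_le. unfold L in *. lra.
Qed.

Lemma family_bound (lam t : R) : 0 <= lam <= L -> 0 <= t <= T -> Rabs (Y lam t) <= Ymax.
Proof.
  intros Hl Ht. destruct (family lam) as [Hsol [Hy0 Hv0]].
  apply (lin_sol_bound _ _ _ B T Hsol Hy0 Hv0 B_ge0); [|exact Ht].
  intros u Hu. apply eig_coeff_bound; assumption.
Qed.

Lemma family_lipschitz (lam mu t : R) : 0 <= lam <= L -> 0 <= mu <= L -> 0 <= t <= T ->
  Rabs (Y lam t - Y mu t) <= Ymax / D * Ymax * Rabs (lam - mu).
Proof.
  intros Hl Hm Ht.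
  destruct (family lam) as [Hl1 [Hl2 Hl3]]. destruct (family mu) as [Hm1 [Hm2 Hm3]].
  replace (Ymax / D * Ymax * Rabs (lam - mu)) with (Rabs (lam - mu) * Ymax / D * Ymax)
    by (unfold Rdiv; ring).
  apply (lin_sol_param_lipschitz _ _ _ _ _ _ B _ T Hl1 Hm1 ltac:(congruence) ltac:(congruence)
           B_ge0); [|exact Ht].
  intros u Hu. split; [apply eig_coeff_bound; assumption|].
  replace (eig_coeff q D lam u - eig_coeff q D mu u) with ((lam - mu) / D)
    by (unfold eig_coeff; field; lra).
  unfold Rdiv. rewrite !Rabs_mult, (Rabs_pos_eq (/ D)) by (left; apply Rinv_0_lt_compat, D_pos).
  rewrite Rmult_assoc, (Rmult_comm (/ D)), <- Rmult_assoc.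
  apply Rmult_le_compat_r; [left; apply Rinv_0_lt_compat, D_pos|].
  apply Rmult_le_compat_l; [apply Rabs_pos | apply family_bound; assumption].
Qed.

Lemma family_pos_near0 (lam t : R) : 0 <= lam <= L ->
  0 < t <= Rmin T (1 / (2 * (B * Ymax + 1))) -> 0 < Y lam t.
Proof.
  intros Hl Ht. destruct (family lam) as [Hsol [Hy0 Hv0]].
  pose proof (Rmin_l T (1 / (2 * (B * Ymax + 1)))).
  pose proof (Rmin_r T (1 / (2 * (B * Ymax + 1)))).
  apply (positive_near_zero _ _ _ B Ymax T Hsol Hy0 Hv0); [|lra | lra].
  intros u Hu. split; [apply eig_coeff_bound | apply family_bound]; auto.
Qed.

Lemma family_pos_L : pos_on Y T L.
Proof.
  intros t Ht. destruct (family L) as [Hsol [Hy0 Hv0]].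
  apply (positive_of_nonneg_coeff _ _ _ T (fun x => eig_coeff_continuous q D L x q_cont)
           Hsol Hy0 Hv0); [|exact Ht].
  intros u Hu. unfold eig_coeff. apply Rmult_le_pos; [|left; apply Rinv_0_lt_compat, D_pos].
  pose proof (q_bound u Hu) as Hqu. apply Rabs_le_between in Hqu. unfold L. lra.
Qed.

Lemma family_first_touching : ~ pos_on Y T 0 ->
  exists ls t0, 0 <= ls <= L /\ (forall t, 0 < t <= T -> 0 <= Y ls t) /\ 0 < t0 <= T /\ Y ls t0 = 0.
Proof.
  intros Hnot0. pose proof Kq_ge0. pose proof B_ge0. pose proof Ymax_ge1.
  apply (first_touching Y L T (Rmin T (1 / (2 * (B * Ymax + 1)))) (Ymax / D * Ymax));
    [unfold L; lra | | | exact family_lipschitz | exact family_pos_near0 | |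
     exact family_pos_L | exact Hnot0].
  - apply Rmult_le_pos; [apply Rmult_le_pos; [lra | left; apply Rinv_0_lt_compat, D_pos] | lra].
  - split; [apply Rmin_pos; [lra | apply Rdiv_lt_0_compat; nra] | apply Rmin_l].
  - intros lam t. destruct (family lam) as [[Hd _] _].
    apply continuity_pt_filterlim, (continuous_of_is_derive _ _ _ (Hd t)).
Qed.

End EigenFamily.

Theorem shooting (q : R -> R) (D T : R) (y0 v0 : R -> R) (s : R) :
  0 < D -> (forall x, continuous q x) ->
  lin_sol (eig_coeff q D 0) y0 v0 -> y0 0 = 0 -> v0 0 = 1 -> 0 < s < T -> y0 s = 0 ->
  exists lam y v, 0 < lam /\ lin_sol (eig_coeff q D lam) y v /\ y 0 = 0 /\ v 0 = 1 /\ y T = 0.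
Proof.
  intros HD Hq Hs0 Hy00 Hv00 Hs Hys.
  assert (Hp : forall lam x, continuous (eig_coeff q D lam) x)
    by (intros; apply eig_coeff_continuous, Hq).
  destruct (eig_family_exists q D Hq) as [Y [V HF]].
  destruct (continuous_bounded q 0 T Hq) as [Kq [_ HKq]].
  assert (HY0 : forall t, Y 0 t = y0 t).
  { destruct (HF 0) as [H1 [H2 H3]]. apply (lin_sol_unique _ _ _ _ _ 0 (Hp 0) H1 Hs0); congruence. }
  destruct (family_first_touching q D T Kq Y V HD ltac:(lra) Hq HKq HF)
    as [ls [t0 [Hls [Hnn [Ht0 Hz]]]]].
  { intros P0. pose proof (P0 s ltac:(lra)) as Hpos. rewrite HY0 in Hpos. lra. }
  destruct (HF ls) as [Hsol [Hy0 Hv0]].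
  assert (Hnn0 : forall t, 0 <= t <= T -> 0 <= Y ls t).
  { intros t Ht. destruct (Req_dec t 0) as [-> | Ht0']; [lra | apply Hnn; lra]. }
  assert (HT : t0 = T).
  { destruct (Req_dec t0 T) as [HT | HT]; [exact HT | exfalso].
    destruct (lin_sol_nontrivial _ _ _ Hsol Hv0) as [u Hu].
    apply Hu, (lin_sol_eq0_of_interior_zero _ _ _ 0 T t0 (Hp ls) Hsol Hnn0); [lra | exact Hz]. }
  assert (Hpos : 0 < ls).
  { destruct (Req_dec ls 0) as [Hls0 | Hls0]; [exfalso | lra].
    destruct (lin_sol_nontrivial _ _ _ Hs0 Hv00) as [u Hu]. apply Hu.
    apply (lin_sol_eq0_of_interior_zero _ _ _ 0 T s (Hp 0) Hs0); [|lra | exact Hys].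
    intros t Ht. rewrite <- HY0. rewrite Hls0 in Hnn0. apply Hnn0, Ht. }
  subst t0. exists ls, (Y ls), (V ls). exact (conj Hpos (conj Hsol (conj Hy0 (conj Hv0 Hz)))).
Qed.

(** * Periodic integrals and the complex spectral problem *)

Lemma RInt_sub_0 (h : R -> R) (a b : R) : (forall x, continuous h x) ->
  RInt h a b = RInt h 0 b - RInt h 0 a.
Proof.
  intros Hh.
  assert (Hex : forall u v, ex_RInt h u v)
    by (intros u v; apply (@ex_RInt_continuous R_CompleteNormedModule); intros; apply Hh).
  assert (E : RInt h 0 a + RInt h a b = RInt h 0 b)
    by exact (RInt_Chasles h 0 a b (Hex _ _) (Hex _ _)).
  lra.
Qed.

Lemma RInt_periodic_shift (h : R -> R) (a : R) : (forall x, continuous h x) ->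
  (forall x, h (x + 1) = h x) -> RInt h a (a + 1) = RInt h 0 1.
Proof.
  intros Hh Hper.
  set (G := fun a => RInt h 0 (1 + a) - RInt h 0 a).
  assert (HG : forall x, is_derive G x 0).
  { intros x. replace 0 with (h (1 + x) - h x) by (rewrite Rplus_comm, Hper; ring).
    apply (is_derive_minus (fun a => RInt h 0 (1 + a)) (fun a => RInt h 0 a)).
    - apply (is_derive_shift (fun b => RInt h 0 b)), is_derive_RInt_0, Hh.
    - apply is_derive_RInt_0, Hh. }
  rewrite (RInt_sub_0 h a) by exact Hh. rewrite Rplus_comm.
  pose proof (eq_of_is_derive_0 G HG a 0) as E. unfold G in E.
  rewrite Rplus_0_r, RInt_point in E. change (@zero R_CompleteNormedModule) with 0 in E. lra.
Qed.

Lemma RInt_antisymmetric (h : R -> R) (x0 r : R) : (forall x, continuous h x) ->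
  (forall t, h (x0 + t) = - h (x0 - t)) -> RInt h (x0 - r) (x0 + r) = 0.
Proof.
  intros Hh Hodd.
  set (G := fun r => RInt h 0 (x0 + r) - RInt h 0 (x0 - r)).
  assert (HG : forall x, is_derive G x 0).
  { intros x. replace 0 with (h (x0 + x) - - h (x0 - x)) by (rewrite Hodd; ring).
    apply (is_derive_minus (fun r => RInt h 0 (x0 + r)) (fun r => RInt h 0 (x0 - r))).
    - apply (is_derive_shift (fun b => RInt h 0 b)), is_derive_RInt_0, Hh.
    - apply (is_derive_reflect (fun b => RInt h 0 b)), is_derive_RInt_0, Hh. }
  rewrite (RInt_sub_0 h) by exact Hh.
  pose proof (eq_of_is_derive_0 G HG r 0) as E. unfold G in E.
  rewrite Rplus_0_r, Rminus_0_r in E. lra.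
Qed.

Lemma RtoC_scal_1 (a : R) : RtoC a = scal a (RtoC 1).
Proof.
  apply injective_projections; simpl; unfold scal; simpl; unfold mult; simpl; ring.
Qed.

Lemma is_derive_RtoC (f : R -> R) (x l : R) : is_derive f x l ->
  @is_derive R_AbsRing C_R_NormedModule (fun x => RtoC (f x)) x (RtoC l).
Proof.
  intros H. rewrite RtoC_scal_1.
  apply (is_derive_ext (fun x => scal (f x) (RtoC 1))); [intros t; symmetry; apply RtoC_scal_1|].
  apply (is_derive_scal_l f x l (RtoC 1) H).
Qed.

Lemma CInt01_RtoC (h : R -> R) : (forall x, continuous h x) ->
  CInt01 (fun y => RtoC (h y)) = RtoC (RInt h 0 1).
Proof.
  intros Hh. unfold CInt01. apply (@is_RInt_unique C_R_CompleteNormedModule).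
  apply (@is_RInt_fct_extend_pair R_NormedModule R_NormedModule (fun y => RtoC (h y)) 0 1 _ 0).
  - apply (@RInt_correct R_CompleteNormedModule), (@ex_RInt_continuous R_CompleteNormedModule).
    intros; apply Hh.
  - replace (0 : R_NormedModule) with (scal (1 - 0) (0 : R)) at 2
      by (unfold scal; simpl; unfold mult; simpl; ring).
    apply (@is_RInt_const R_NormedModule).
Qed.

Lemma is_eigenvalue_L_of_real (D kappa lam : R) (U y v y2 : R -> R) :
  (forall x, continuous U x) -> periodic1 y -> (exists x, y x <> 0) ->
  (forall x, is_derive y x (v x)) -> (forall x, is_derive v x (y2 x)) ->
  RInt (fun x => exp (U x) * y x) 0 1 = 0 ->
  (forall x, D * y2 x + (kappa * exp (U x) / massU U - 1) * y x = lam * y x) ->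
  is_eigenvalue_L D kappa U (RtoC lam).
Proof.
  intros HU Hper [x0 Hx0] Hy Hv Hint Heq.
  exists (fun x => RtoC (y x)), (fun x => RtoC (v x)), (fun x => RtoC (y2 x)).
  split; [intros x; unfold periodic1 in Hper; now rewrite Hper|].
  split; [exists x0; intros E; apply Hx0; exact (f_equal fst E)|].
  split; [intros x; apply is_derive_RtoC, Hy|].
  split; [intros x; apply is_derive_RtoC, Hv|].
  intros x. unfold Lop.
  assert (HI : CInt01 (fun z => Cmult (RtoC (exp (U z))) (RtoC (y z))) = RtoC 0).
  { rewrite <- Hint, <- CInt01_RtoC.
    - f_equal. extensionality z. symmetry. apply RtoC_mult.
    - intros z. apply (continuous_mult (fun z => exp (U z)) y).
      + apply (continuous_comp U exp); [apply HU|].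
        apply continuous_of_is_derive with (exp (U z)). apply is_derive_Reals, derivable_pt_lim_exp.
      + apply (continuous_of_is_derive _ _ _ (Hy z)). }
  rewrite HI, <- !RtoC_mult, <- RtoC_plus, <- RtoC_minus, <- Heq. f_equal. ring.
Qed.

(** * Stationary solutions *)

Definition stat_rhs (D c u : R) : R := (u - c * exp u) / D.

Lemma stat_rhs_locally_lipschitz (D c : R) : 0 < D -> forall M, exists K, 0 <= K /\
  forall u w, Rabs u <= M -> Rabs w <= M ->
    Rabs (stat_rhs D c u - stat_rhs D c w) <= K * Rabs (u - w).
Proof.
  intros HD M. exists ((1 + Rabs c * exp M) / D).
  pose proof (Rabs_pos c). pose proof (exp_pos M).
  split; [apply Rmult_le_pos; [nra | left; apply Rinv_0_lt_compat, HD]|].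
  intros u w Hu Hw. apply Rabs_le_between in Hu, Hw.
  replace (stat_rhs D c u - stat_rhs D c w) with ((u - w - c * (exp u - exp w)) / D)
    by (unfold stat_rhs; field; lra).
  unfold Rdiv. rewrite Rabs_mult, (Rabs_pos_eq (/ D)) by (left; apply Rinv_0_lt_compat, HD).
  assert (Hnum : Rabs (u - w - c * (exp u - exp w)) <= (1 + Rabs c * exp M) * Rabs (u - w)).
  { eapply Rle_trans; [apply Rabs_triang|]. rewrite Rabs_Ropp, Rabs_mult.
    pose proof (exp_lipschitz u w M ltac:(lra) ltac:(lra)).
    pose proof (Rabs_pos (u - w)). nra. }
  pose proof (Rinv_0_lt_compat D HD). nra.
Qed.

Lemma zero_in_half_period (f : R -> R) (x1 x2 x3 : R) :
  (forall x, f (x + 1) = f x) -> (forall x0, f x0 = 0 -> forall t, f (x0 + t) = - f (x0 - t)) ->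
  0 <= x1 < 1 -> 0 <= x2 < 1 -> 0 <= x3 < 1 -> x1 <> x2 -> x1 <> x3 -> x2 <> x3 ->
  f x1 = 0 -> f x2 = 0 -> f x3 = 0 -> exists s, 0 < s < 1 / 2 /\ f (x1 + s) = 0.
Proof.
  intros Hper Hanti Hx1 Hx2 Hx3 H12 H13 H23 Z1 Z2 Z3.
  assert (Hpair : forall z, 0 <= z < 1 -> z <> x1 -> f z = 0 -> exists a,
            0 < a < 1 /\ f (x1 + a) = 0 /\ f (x1 + (1 - a)) = 0 /\ (a = z - x1 \/ a = z - x1 + 1)).
  { intros z Hz Hzx Hfz.
    assert (Ha : exists a, 0 < a < 1 /\ f (x1 + a) = 0 /\ (a = z - x1 \/ a = z - x1 + 1)).
    { destruct (Rlt_le_dec x1 z).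
      - exists (z - x1). split; [lra|].
        split; [now replace (x1 + (z - x1)) with z by ring | now left].
      - exists (z - x1 + 1). split; [lra|]. split; [|now right].
        replace (x1 + (z - x1 + 1)) with (z + 1) by ring. now rewrite Hper. }
    destruct Ha as [a [Ha [Hfa Hae]]]. exists a. repeat split; auto; try lra.
    replace (x1 + (1 - a)) with ((x1 - a) + 1) by ring.
    rewrite Hper. rewrite (Hanti x1 Z1 a) in Hfa. lra. }
  destruct (Hpair x2 Hx2 (not_eq_sym H12) Z2) as [a2 [Ha2 [Hf2 [Hf2' Ha2e]]]].
  destruct (Hpair x3 Hx3 (not_eq_sym H13) Z3) as [a3 [Ha3 [Hf3 [Hf3' Ha3e]]]].
  assert (a2 <> a3) by (intros E; destruct Ha2e, Ha3e; lra).
  destruct (Rlt_le_dec a2 (1 / 2)); [exists a2; split; [lra | exact Hf2]|].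
  destruct (Req_dec a2 (1 / 2)); [|exists (1 - a2); split; [lra | exact Hf2']].
  destruct (Rlt_le_dec a3 (1 / 2)); [exists a3; split; [lra | exact Hf3]|].
  exists (1 - a3). split; [lra | exact Hf3'].
Qed.

Definition stat_potential (kappa : R) (U : R -> R) (x0 t : R) : R :=
  kappa * exp (U (x0 + t)) / massU U - 1.

Section Stationary.

Variables (D kappa : R) (U : R -> R).
Hypothesis D_pos : 0 < D.
Hypothesis U_stat : stationary_solution D kappa U.

Lemma stationary_is_derive (x : R) : is_derive U x (Derive U x).
Proof. destruct U_stat as [_ [HU _]]. apply Derive_correct, HU. Qed.

Lemma stationary_is_derive2 (x : R) :
  is_derive (Derive U) x (stat_rhs D (kappa / massU U) (U x)).
Proof.
  destruct U_stat as [_ [_ [HU1 Heq]]].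
  replace (stat_rhs D (kappa / massU U) (U x)) with (Derive (Derive U) x).
  - apply Derive_correct, HU1.
  - specialize (Heq x). change (Derive_n U 2 x) with (Derive (Derive U) x) in Heq.
    unfold stat_rhs. replace (kappa / massU U * exp (U x)) with (kappa * exp (U x) / massU U)
      by (unfold Rdiv; ring).
    set (a := U x - kappa * exp (U x) / massU U).
    apply Rmult_eq_reg_l with D; [|lra]. replace (D * (a / D)) with a by (field; lra).
    unfold a. lra.
Qed.

Lemma stationary_unique (a a1 : R -> R) (x0 : R) :
  (forall t, is_derive a t (a1 t)) ->
  (forall t, is_derive a1 t (stat_rhs D (kappa / massU U) (a t))) ->
  a 0 = U x0 -> a1 0 = Derive U x0 -> forall t, U (x0 + t) = a t.
Proof.
  intros Ha Ha1 E0 E1.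
  apply (autonomous_unique _ (fun t => U (x0 + t)) (fun t => Derive U (x0 + t)) a a1
           (stat_rhs_locally_lipschitz D (kappa / massU U) D_pos)); auto.
  - intros t. apply is_derive_shift, stationary_is_derive.
  - intros t. apply (is_derive_shift (Derive U)), stationary_is_derive2.
  - now rewrite Rplus_0_r.
  - now rewrite Rplus_0_r.
Qed.

Lemma stationary_symmetric (x0 : R) : Derive U x0 = 0 -> forall t, U (x0 + t) = U (x0 - t).
Proof.
  intros Hx0. apply (stationary_unique _ (fun t => - Derive U (x0 - t))).
  - intros t. apply is_derive_reflect, stationary_is_derive.
  - intros t. rewrite <- (Ropp_involutive (stat_rhs _ _ _)).
    apply (is_derive_opp (fun t => Derive U (x0 - t))), (is_derive_reflect (Derive U)),
      stationary_is_derive2.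
  - now rewrite Rminus_0_r.
  - rewrite Rminus_0_r, Hx0. ring.
Qed.

Lemma stationary_derive_antisymmetric (x0 : R) : Derive U x0 = 0 ->
  forall t, Derive U (x0 + t) = - Derive U (x0 - t).
Proof.
  intros Hx0 t.
  assert (Hplus : is_derive (fun s => U (x0 + s)) t (Derive U (x0 + t)))
    by apply is_derive_shift, stationary_is_derive.
  assert (Hminus : is_derive (fun s => U (x0 + s)) t (- Derive U (x0 - t))).
  { apply (is_derive_ext (fun s => U (x0 - s)));
      [intros s; symmetry; apply stationary_symmetric, Hx0|].
    apply is_derive_reflect, stationary_is_derive. }
  rewrite <- (is_derive_unique _ _ _ Hplus). exact (is_derive_unique _ _ _ Hminus).
Qed.

Lemma stationary_derive_periodic (x : R) : Derive U (x + 1) = Derive U x.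
Proof.
  destruct U_stat as [Hper _].
  assert (H : is_derive (fun s => U (1 + s)) x (Derive U (1 + x)))
    by apply is_derive_shift, stationary_is_derive.
  apply (is_derive_ext _ U) in H; [|intros s; rewrite Rplus_comm; apply Hper].
  rewrite Rplus_comm, (is_derive_unique _ _ _ H). reflexivity.
Qed.

Lemma stationary_second_derive_neq0 (x0 : R) : (exists x y, U x <> U y) ->
  Derive U x0 = 0 -> Derive (Derive U) x0 <> 0.
Proof.
  intros [xa [xb Hne]] Hx0 H2. apply Hne.
  assert (Hconst : forall t, U (x0 + t) = U x0).
  { apply (stationary_unique (fun _ => U x0) (fun _ => 0)); [| |reflexivity | now rewrite Hx0].
    - intros t. apply (@is_derive_const R_AbsRing R_NormedModule).
    - intros t. replace (stat_rhs D (kappa / massU U) (U x0)) with 0;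
        [apply (@is_derive_const R_AbsRing R_NormedModule)|].
      rewrite <- H2. apply is_derive_unique, stationary_is_derive2. }
  replace xa with (x0 + (xa - x0)) by ring. replace xb with (x0 + (xb - x0)) by ring.
  now rewrite !Hconst.
Qed.

Lemma stat_potential_continuous (x0 t : R) : continuous (stat_potential kappa U x0) t.
Proof.
  assert (H : is_derive (stat_potential kappa U x0) t
                (kappa * (Derive U (x0 + t) * exp (U (x0 + t))) / massU U)).
  { unfold stat_potential. auto_derive; [exists (Derive U (x0 + t)); apply stationary_is_derive|].
    rewrite_Derive (stationary_is_derive (x0 + t)). unfold Rdiv. ring. }
  exact (continuous_of_is_derive _ _ _ H).
Qed.

Lemma stat_potential_symmetric (x0 : R) : Derive U x0 = 0 ->
  (forall t, stat_potential kappa U x0 (2 * 0 - t) = stat_potential kappa U x0 t) /\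
  (forall t, stat_potential kappa U x0 (2 * (1 / 2) - t) = stat_potential kappa U x0 t).
Proof.
  intros Hx0. destruct U_stat as [Hper _].
  unfold stat_potential. split; intros t.
  - replace (x0 + (2 * 0 - t)) with (x0 - t) by ring. now rewrite <- stationary_symmetric.
  - replace (x0 + (2 * (1 / 2) - t)) with ((x0 - t) + 1) by field.
    now rewrite Hper, <- stationary_symmetric.
Qed.

Lemma stationary_linearized (x0 : R) :
  lin_sol (eig_coeff (stat_potential kappa U x0) D 0)
    (fun t => Derive U (x0 + t)) (fun t => Derive (Derive U) (x0 + t)).
Proof.
  split; intros t.
  - apply (is_derive_shift (Derive U)), Derive_correct.
    exists (stat_rhs D (kappa / massU U) (U (x0 + t))).
    apply stationary_is_derive2.
  - apply is_derive_shift.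
    apply (is_derive_ext (fun x => stat_rhs D (kappa / massU U) (U x))).
    { intros x. symmetry. apply is_derive_unique, stationary_is_derive2. }
    unfold stat_rhs.
    auto_derive; [repeat split; exists (Derive U (x0 + t)); apply stationary_is_derive|].
    rewrite_Derive (stationary_is_derive (x0 + t)). unfold eig_coeff, stat_potential, Rdiv. ring.
Qed.

Lemma stationary_eigenfunction (x1 s : R) : (exists x y, U x <> U y) ->
  Derive U x1 = 0 -> 0 < s < 1 / 2 -> Derive U (x1 + s) = 0 ->
  exists lam y v, 0 < lam /\ lin_sol (eig_coeff (stat_potential kappa U x1) D lam) y v /\
    v 0 = 1 /\ (forall t, y (t + 1) = y t) /\ (forall t, y (- t) = - y t).
Proof.
  intros Hnc Hx1 Hs Hzs.
  set (c2 := Derive (Derive U) x1).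
  assert (Hc2 : c2 <> 0) by exact (stationary_second_derive_neq0 x1 Hnc Hx1).
  destruct (shooting (stat_potential kappa U x1) D (1 / 2)
              (fun t => / c2 * Derive U (x1 + t)) (fun t => / c2 * Derive (Derive U) (x1 + t)) s)
    as [lam [y [v [Hlam [Hsol [Hy0 [Hv0 Hyh]]]]]]].
  - exact D_pos.
  - apply stat_potential_continuous.
  - apply lin_sol_scal, stationary_linearized.
  - rewrite Rplus_0_r, Hx1. ring.
  - rewrite Rplus_0_r. fold c2. field. exact Hc2.
  - exact Hs.
  - rewrite Hzs. ring.
  - exists lam, y, v. do 3 (split; [assumption|]).
    assert (Hp : forall x, continuous (eig_coeff (stat_potential kappa U x1) D lam) x)
      by (intros; apply eig_coeff_continuous, stat_potential_continuous).
    destruct (stat_potential_symmetric x1 Hx1) as [Hsym0 Hsymh].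
    pose proof (lin_sol_antisymmetric _ _ _ 0 Hp Hsol (eig_coeff_reflect _ D lam 0 Hsym0) Hy0)
      as Hodd0.
    pose proof (lin_sol_antisymmetric _ _ _ (1 / 2) Hp Hsol (eig_coeff_reflect _ D lam _ Hsymh) Hyh)
      as Hodd1.
    assert (Hodd : forall t, y (- t) = - y t) by (intros t; rewrite <- Hodd0; f_equal; ring).
    split; [|exact Hodd]. intros t.
    rewrite <- (Ropp_involutive (y t)), <- Hodd, <- Hodd1. f_equal. field.
Qed.

Lemma stationary_weighted_integral (x1 : R) (y : R -> R) : Derive U x1 = 0 ->
  (forall x, continuous y x) -> (forall t, y (t + 1) = y t) -> (forall t, y (- t) = - y t) ->
  RInt (fun x => exp (U x) * y (x - x1)) 0 1 = 0.
Proof.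
  intros Hx1 Hyc Hper Hodd. destruct U_stat as [HUper _].
  set (h := fun x => exp (U x) * y (x - x1)).
  assert (Hh : forall x, continuous h x).
  { intros x. apply (continuous_mult (fun x => exp (U x)) (fun x => y (x - x1))).
    - apply continuous_of_is_derive with (l := Derive U x * exp (U x)).
      auto_derive; [exists (Derive U x); apply stationary_is_derive|].
      rewrite_Derive (stationary_is_derive x). ring.
    - apply (continuous_comp (fun x => x - x1) y); [|apply Hyc].
      apply continuous_of_is_derive with (l := 1). auto_derive; [exact I | ring]. }
  rewrite <- (RInt_periodic_shift h (x1 - 1 / 2) Hh).
  - replace (x1 - 1 / 2 + 1) with (x1 + 1 / 2) by field. apply RInt_antisymmetric; [exact Hh|].
    intros t. unfold h.
    replace (x1 + t - x1) with t by ring. replace (x1 - t - x1) with (- t) by ring.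
    rewrite Hodd, <- stationary_symmetric by exact Hx1. ring.
  - intros x. unfold h. replace (x + 1 - x1) with ((x - x1) + 1) by ring. now rewrite HUper, Hper.
Qed.

End Stationary.

Theorem mainTheorem10 (D kappa : R) (U : R -> R) :
  0 < D -> 0 < kappa ->
  stationary_solution D kappa U ->
  (exists x y, U x <> U y) ->
  (exists x1 x2 x3 : R,
      0 <= x1 < 1 /\ 0 <= x2 < 1 /\ 0 <= x3 < 1 /\
      x1 <> x2 /\ x1 <> x3 /\ x2 <> x3 /\
      Derive U x1 = 0 /\ Derive U x2 = 0 /\ Derive U x3 = 0) ->
  linearly_unstable D kappa U.
Proof.
  intros HD _ Hstat Hnc [x1 [x2 [x3 [Hx1 [Hx2 [Hx3 [H12 [H13 [H23 [Z1 [Z2 Z3]]]]]]]]]]].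
  destruct (zero_in_half_period (Derive U) x1 x2 x3 (stationary_derive_periodic D kappa U Hstat)
              (stationary_derive_antisymmetric D kappa U HD Hstat) Hx1 Hx2 Hx3 H12 H13 H23 Z1 Z2 Z3)
    as [s [Hs Hzs]].
  destruct (stationary_eigenfunction D kappa U HD Hstat x1 s Hnc Z1 Hs Hzs)
    as [lam [y [v [Hlam [[Hy Hv] [Hv0 [Hper Hodd]]]]]]].
  exists (RtoC lam). split; [exact Hlam|].
  apply (is_eigenvalue_L_of_real D kappa lam U (fun x => y (x - x1)) (fun x => v (x - x1))
           (fun x => eig_coeff (stat_potential kappa U x1) D lam (x - x1) * y (x - x1))).
  - intros x. exact (continuous_of_is_derive _ _ _ (stationary_is_derive D kappa U Hstat x)).
  - intros x. replace (x + 1 - x1) with (x - x1 + 1) by ring. apply Hper.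
  - destruct (lin_sol_nontrivial _ _ _ (conj Hy Hv) Hv0) as [t Ht].
    exists (t + x1). now replace (t + x1 - x1) with t by ring.
  - intros x. apply is_derive_sub_shift, Hy.
  - intros x. apply (is_derive_sub_shift v), Hv.
  - apply (stationary_weighted_integral D kappa U HD Hstat); auto.
    intros x. exact (continuous_of_is_derive _ _ _ (Hy x)).
  - intros x. unfold eig_coeff, stat_potential. replace (x1 + (x - x1)) with x by ring.
    set (w := kappa * exp (U x) / massU U). field. lra.
Qed.
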